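(* Let $\alpha$ be a Young tableau with $k$ boxes and $r$ rows and $x_1,\dots,x_r\in\mathcal{H}$. Then $\pi^\alpha(x_{\alpha(1)}\otimes\cdots\otimes x_{\alpha(k)})\neq0$ if and only if $x_1\wedge\cdots\wedge x_r\ne0$ (i.e. $x_1,\dots,x_r$ are linearly independent), and in that case the projective class of $\pi^\alpha(x_{\alpha(1)}\otimes\cdots\otimes x_{\alpha(k)})$ depends only on the projective classes of $x_1,\dots,x_r$.
   Context: $\mathcal{H}$ is a finite-dimensional complex Hilbert space. Young tableau $\alpha$: a partition $k=\lambda_1+\cdots+\lambda_r$, $\lambda_1\ge\cdots\ge\lambda_r\ge1$, drawn as left-aligned rows of $\lambda_i$ boxes, boxes numbered bijectively by $1,\dots,k$; $\alpha(i)$ is the row index of the box numbered $i$. $S_k$ acts on $\mathcal{H}^{\otimes k}$ by permuting factors, $\sigma(y_1\otimes\cdots\otimes y_k)=y_{\sigma(1)}\otimes\cdots\otimes y_{\sigma(k)}$. $P_\alpha$, $Q_\alpha$ are the row- and column-preserving subgroups; $c_\alpha=\big(\sum_{\tau\in Q_\alpha}(-1)^\tau\tau\big)\circ\big(\sum_{\sigma\in P_\alpha}\sigma\big)$, and $\pi^\alpha=c_\alpha/\mu(\alpha)$ with $\mu(\alpha)\neq0$ the rational number such that $c_\alpha^2=\mu(\alpha)c_\alpha$. *)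

From HB Require Import structures.
From mathcomp Require Import all_boot all_order all_algebra all_fingroup.
Set Implicit Arguments. Unset Strict Implicit. Unset Printing Implicit Defensive.
Import Order.TTheory GRing.Theory Num.Theory.
Local Open Scope ring_scope.

(* H = 'rV[C]_n (finite-dim complex space, C any algebraically closed
   numeric field, e.g. the complex numbers).  H^{(x)k} is represented by
   coordinates in the standard product basis: a tensor is a function on
   multi-indices f : 'I_k -> 'I_n. *)
Notation tensor C n k := {ffun {ffun 'I_k -> 'I_n} -> C^o}.

Definition ptensor (C : numClosedFieldType) (n k : nat)
  (y : 'I_k -> 'rV[C]_n) : tensor C n k :=
  [ffun f : {ffun 'I_k -> 'I_n} => \prod_(i < k) y i 0 (f i)].

(* the action  s(y_1 (x)...(x) y_k) = y_{s 1} (x) ... (x) y_{s k},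
   extended linearly: (s T)(f) = T(f o s^-1). *)
Definition permT (C : numClosedFieldType) (n k : nat) (s : {perm 'I_k})
  (t : tensor C n k) : tensor C n k :=
  [ffun f : {ffun 'I_k -> 'I_n} => t [ffun i : 'I_k => f ((s^-1)%g i)]].

(* Young tableau with k boxes and r rows: shape lam (lam_0 >= ... >= lam_{r-1} >= 1),
   box numbered i sits in row (row i) and column (col i); the numbering is a
   bijection between 'I_k and the boxes {(a,b) | b < lam a}. *)
Definition is_tableau (k r : nat) (lam : 'I_r -> nat)
  (row : 'I_k -> 'I_r) (col : 'I_k -> nat) : Prop :=
  [/\ forall a b : 'I_r, (a <= b)%N -> (lam b <= lam a)%N,
      forall a : 'I_r, (0 < lam a)%N,
      forall i j : 'I_k, row i = row j -> col i = col j -> i = j,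
      forall i : 'I_k, (col i < lam (row i))%N
    & forall (a : 'I_r) (b : nat), (b < lam a)%N ->
        exists i : 'I_k, row i = a /\ col i = b].

Definition rowpres (k r : nat) (row : 'I_k -> 'I_r) (s : {perm 'I_k}) : bool :=
  [forall i, row (s i) == row i].
Definition colpres (k : nat) (col : 'I_k -> nat) (s : {perm 'I_k}) : bool :=
  [forall i, col (s i) == col i].

Definition sgnp (C : numClosedFieldType) (k : nat) (s : {perm 'I_k}) : C :=
  (-1) ^+ odd_perm s.

Definition young_c (C : numClosedFieldType) (n k r : nat)
  (row : 'I_k -> 'I_r) (col : 'I_k -> nat) (t : tensor C n k) : tensor C n k :=
  \sum_(tau : {perm 'I_k} | colpres col tau)
     sgnp C tau *: permT tau (\sum_(sig : {perm 'I_k} | rowpres row sig) permT sig t).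

(* c_alpha as an element of the group algebra C[S_k] (a function S_k -> C).
   With MathComp's product (s * t = "s then t"), permT (tau * sig) = permT tau o permT sig,
   so the group-algebra product matching operator composition is tau * sig. *)
Definition young_c_ga (C : numClosedFieldType) (k r : nat)
  (row : 'I_k -> 'I_r) (col : 'I_k -> nat) (g : {perm 'I_k}) : C :=
  \sum_(tau : {perm 'I_k} | colpres col tau)
    \sum_(sig : {perm 'I_k} | rowpres row sig)
       (if (tau * sig)%g == g then sgnp C tau else 0).

Definition ga_mul (C : numClosedFieldType) (k : nat) (a b : {perm 'I_k} -> C)
  (g : {perm 'I_k}) : C :=
  \sum_(g1 : {perm 'I_k}) \sum_(g2 : {perm 'I_k} | (g1 * g2)%g == g) a g1 * b g2.

Definition is_young_mu (C : numClosedFieldType) (k r : nat)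
  (row : 'I_k -> 'I_r) (col : 'I_k -> nat) (mu : C) : Prop :=
  mu != 0 /\
  forall g, ga_mul (young_c_ga C row col) (young_c_ga C row col) g
            = mu * young_c_ga C row col g.

Definition young_pi (C : numClosedFieldType) (n k r : nat)
  (row : 'I_k -> 'I_r) (col : 'I_k -> nat) (mu : C) (t : tensor C n k) : tensor C n k :=
  mu^-1 *: young_c row col t.

From HB Require Import structures.
From mathcomp Require Import all_boot all_order all_algebra all_fingroup.
Import GRing.Theory Num.Theory.
Set Implicit Arguments. Unset Strict Implicit.
Local Open Scope ring_scope.

(* Write x_row for the product tensor x_{row 1} (x) ... (x) x_{row k}.
   Every row-preserving permutation fixes x_row, so c_alpha x_row = |P_alpha| . A(x_row),
   where A(z) = sum_{tau in Q_alpha} sgn(tau) z_{tau 1} (x) ... (x) z_{tau k} is the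
   column antisymmetrizer applied to a product tensor; hence pi^alpha x_row is a nonzero
   multiple of A(x_row) and everything reduces to properties of A:
   - A is alternating along columns and linear in each slot.  Every row has a box in
     column 0, so a linear dependency among x_1..x_r, expanded in the slot of such a box,
     writes A(x_row) as a combination of terms with a repeated vector in column 0: A = 0.
   - If x_1..x_r are free, a dual matrix B (X B = 1) gives a linear functional sending the
     tau-term of A(x_row) to [tau row-preserving]; as a box is determined by its row and
     column, only tau = 1 survives and the functional takes the value 1 on A(x_row).
   - A is multilinear, so rescaling each x_a by c_a rescales A(x_row) by prod_i c_(row i). *)

Section ProductTensors.

Variables (C : numClosedFieldType) (n k : nat).

Lemma ptensor_ext (y z : 'I_k -> 'rV[C]_n) : y =1 z -> ptensor y = ptensor z.
Proof. by move=> e; apply/ffunP=> f; rewrite !ffunE; apply: eq_bigr => i _; rewrite e. Qed.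

Lemma permT_ptensor (s : {perm 'I_k}) (y : 'I_k -> 'rV[C]_n) :
  permT s (ptensor y) = ptensor (fun i => y (s i)).
Proof.
apply/ffunP=> f; rewrite !ffunE (reindex_inj (@perm_inj _ s)) /=.
by apply: eq_bigr => i _; rewrite ffunE permK.
Qed.

Lemma permTZ (s : {perm 'I_k}) (a : C) (t : tensor C n k) :
  permT s (a *: t) = a *: permT s t.
Proof. by apply/ffunP=> f; rewrite !ffunE. Qed.

Section ColumnAntisymmetrizer.

Variable col : 'I_k -> nat.

Definition col_antisym (z : 'I_k -> 'rV[C]_n) : tensor C n k :=
  \sum_(tau : {perm 'I_k} | colpres col tau) sgnp C tau *: ptensor (fun i => z (tau i)).

Lemma col_antisym_ext (z1 z2 : 'I_k -> 'rV[C]_n) :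
  z1 =1 z2 -> col_antisym z1 = col_antisym z2.
Proof.
by move=> e; apply: eq_bigr => t _; congr (_ *: _); apply: ptensor_ext => i; rewrite e.
Qed.

(* Alternation: two equal factors in one column kill the antisymmetrizer
   (it equals its own opposite, and C has characteristic 0). *)
Lemma col_antisym_swap (z : 'I_k -> 'rV[C]_n) (i1 i2 : 'I_k) :
  i1 != i2 -> col i1 = col i2 -> z i1 = z i2 -> col_antisym z = 0.
Proof.
move=> hne hc hz; set t := tperm i1 i2.
have ht i : col (t i) = col i by rewrite /t; case: tpermP => [->|->|]; rewrite ?hc.
have hcp s : colpres col (s * t)%g = colpres col s.
  by apply/forallP/forallP => h i; [have := h i | ]; rewrite permM ht.
have anti : col_antisym z = - col_antisym z.
  rewrite {1}/col_antisym (reindex_inj (mulIg t)) /= -sumrN.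
  apply: eq_big => [s|s _]; first exact: hcp.
  rewrite /sgnp odd_permM odd_tperm hne signr_addb /= expr1 mulrN1 scaleNr.
  congr (- (_ *: _)); apply: ptensor_ext => i.
  by rewrite permM /t; case: tpermP => [->|->|].
apply/ffunP => f; have /= := congr1 (fun u : tensor C n k => u f) anti.
rewrite !ffunE => /eqP; rewrite -subr_eq0 opprK -mulr2n mulrn_eq0 /= => /eqP -> //.
Qed.

Lemma col_antisym_lin (r : nat) (z : 'I_k -> 'rV[C]_n) (j : 'I_k)
    (w : 'I_r -> 'rV[C]_n) (v : 'I_r -> C) :
  \sum_a v a *: w a = 0 ->
  \sum_a v a *: col_antisym (fun i => if i == j then w a else z i) = 0.
Proof.
move=> hw; apply/ffunP => f; rewrite sum_ffunE [RHS]ffunE.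
under eq_bigr => a _ do rewrite ffunE /col_antisym sum_ffunE scaler_sumr.
rewrite exchange_big /= big1 // => tau _; set j' := (tau^-1)%g j.
have split_j a : v a *: (sgnp C tau *: ptensor (fun i => if tau i == j then w a else z (tau i))) f
    = sgnp C tau * (v a * w a 0 (f j')) * \prod_(i | i != j') z (tau i) 0 (f i).
  rewrite !ffunE (bigD1 j') //= /j' permKV eqxx.
  rewrite (eq_bigr (fun i => z (tau i) 0 (f i))); last first.
    by move=> i hi; rewrite -(inj_eq (@perm_inj _ (tau^-1)%g)) permK (negPf hi).
  by rewrite /GRing.scale /= mulrA [v a * _]mulrC -!mulrA.
under eq_bigr => a _ do rewrite split_j.
rewrite -mulr_suml -mulr_sumr.
suff -> : \sum_a v a * w a 0 (f j') = 0 by rewrite mulr0 mul0r.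
transitivity ((\sum_a v a *: w a) 0 (f j')); last by rewrite hw mxE.
by rewrite summxE; apply: eq_bigr => a _; rewrite mxE.
Qed.

Section Rows.

Variables (r : nat) (row : 'I_k -> 'I_r).

Lemma col_antisym_scale (x y : 'I_r -> 'rV[C]_n) (c : 'I_r -> C) :
  (forall a, y a = c a *: x a) ->
  col_antisym (fun i => y (row i)) = (\prod_i c (row i)) *: col_antisym (fun i => x (row i)).
Proof.
move=> hy; rewrite /col_antisym scaler_sumr; apply: eq_bigr => tau _.
rewrite scalerA mulrC -scalerA; congr (_ *: _); apply/ffunP => f; rewrite !ffunE.
rewrite [\prod_(i : 'I_k) c (row i)](reindex_inj (@perm_inj _ tau)) /= /GRing.scale /= -big_split /=.
by apply: eq_bigr => i _; rewrite hy mxE.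
Qed.

Lemma young_c_ptensor (x : 'I_r -> 'rV[C]_n) :
  young_c row col (ptensor (fun i => x (row i))) =
  #|[pred s : {perm 'I_k} | rowpres row s]|%:R *: col_antisym (fun i => x (row i)).
Proof.
rewrite /young_c /col_antisym scaler_sumr.
have -> : \sum_(sig | rowpres row sig) permT sig (ptensor (fun i => x (row i)))
        = \sum_(sig | rowpres row sig) ptensor (fun i => x (row i)).
  apply: eq_bigr => s /forallP hs; rewrite permT_ptensor.
  by apply: ptensor_ext => i; rewrite (eqP (hs i)).
rewrite sumr_const -scaler_nat; apply: eq_bigr => tau _.
by rewrite permTZ permT_ptensor !scalerA mulrC.
Qed.

Lemma col_antisym_dependent (x : 'I_r -> 'rV[C]_n) (box : 'I_r -> 'I_k) (v : 'I_r -> C) (b : 'I_r) :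
  (forall a, row (box a) = a) -> (forall a a', col (box a) = col (box a')) ->
  \sum_a v a *: x a = 0 -> v b != 0 -> col_antisym (fun i => x (row i)) = 0.
Proof.
move=> hrow hcol hdep hb.
have := col_antisym_lin (fun i => x (row i)) (box b) hdep.
rewrite (bigD1 b) //= big1 ?addr0; last first.
  move=> a hab; apply/eqP; rewrite scaler_eq0; apply/orP; right; apply/eqP.
  have hne : box a != box b by apply: contraNneq hab => e; rewrite -(hrow a) e hrow.
  by apply: (@col_antisym_swap _ (box a) (box b)); rewrite // eqxx (negPf hne) hrow.
rewrite (@col_antisym_ext _ (fun i => x (row i))); last first.
  by move=> i; case: eqP => // ->; rewrite hrow.
by move/eqP; rewrite scaler_eq0 (negPf hb) => /eqP.
Qed.

Definition dual_eval (U : 'I_n -> 'I_r -> C) (t : tensor C n k) : C :=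
  \sum_(f : {ffun 'I_k -> 'I_n}) t f * \prod_j U (f j) (row j).

Lemma dual_eval_ptensor (U : 'I_n -> 'I_r -> C) (z : 'I_k -> 'rV[C]_n) :
  dual_eval U (ptensor z) = \prod_j \sum_m z j 0 m * U m (row j).
Proof.
rewrite bigA_distr_bigA; apply: eq_bigr => f _.
by rewrite ffunE -big_split.
Qed.

Lemma dual_eval_antisym (U : 'I_n -> 'I_r -> C) (z : 'I_k -> 'rV[C]_n) :
  dual_eval U (col_antisym z) =
  \sum_(tau | colpres col tau) sgnp C tau * dual_eval U (ptensor (fun i => z (tau i))).
Proof.
rewrite /dual_eval /col_antisym.
under eq_bigr => f _ do rewrite sum_ffunE mulr_suml.
rewrite exchange_big /=; apply: eq_bigr => tau _; rewrite mulr_sumr.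
by apply: eq_bigr => f _; rewrite ffunE mulrA.
Qed.

Lemma dual_eval_rows (U : 'I_n -> 'I_r -> C) (x : 'I_r -> 'rV[C]_n) (tau : {perm 'I_k}) :
  (forall b a, \sum_m x b 0 m * U m a = (b == a)%:R) ->
  dual_eval U (ptensor (fun i => x (row (tau i)))) = (rowpres row tau)%:R.
Proof.
move=> hU; rewrite dual_eval_ptensor; under eq_bigr => j _ do rewrite hU.
case: (boolP (rowpres row tau)) => [/forallP h|/forallPn [j hj]].
  by rewrite big1 // => j _; rewrite h.
by rewrite (bigD1 j) //= (negPf hj) mul0r.
Qed.

Lemma rowpres_colpres_id (tau : {perm 'I_k}) :
  (forall i j : 'I_k, row i = row j -> col i = col j -> i = j) ->
  rowpres row tau -> colpres col tau -> tau = 1%g.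
Proof.
move=> inj /forallP hr /forallP hc; apply/permP => i; rewrite perm1.
by apply: inj; apply/eqP; [apply: hr | apply: hc].
Qed.

Lemma col_antisym_free (x : 'I_r -> 'rV[C]_n) (U : 'I_n -> 'I_r -> C) :
  (forall i j : 'I_k, row i = row j -> col i = col j -> i = j) ->
  (forall b a, \sum_m x b 0 m * U m a = (b == a)%:R) ->
  col_antisym (fun i => x (row i)) != 0.
Proof.
move=> inj hU; have rowpres1 : rowpres row (1%g : {perm 'I_k}).
  by apply/forallP => i; rewrite perm1.
have : dual_eval U (col_antisym (fun i => x (row i))) = 1.
  have colpres1 : colpres col (1%g : {perm 'I_k}) by apply/forallP => i; rewrite perm1.
  rewrite dual_eval_antisym (bigD1 1%g) //=.
  rewrite big1 ?addr0 => [|tau /andP[hc hne]]; rewrite dual_eval_rows //.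
    by rewrite rowpres1 /sgnp odd_perm1 mulr1.
  case: (boolP (rowpres row tau)) => [hr|]; last by rewrite mulr0.
  by rewrite (rowpres_colpres_id inj hr hc) eqxx in hne.
apply: contra_eqN => /eqP ->; rewrite /dual_eval big1 => [|f _].
  by rewrite eq_sym oner_neq0.
by rewrite ffunE mul0r.
Qed.

End Rows.
End ColumnAntisymmetrizer.
End ProductTensors.

Lemma free_row_free (C : fieldType) (n r : nat) (x : 'I_r -> 'rV[C]_n) :
  free [tuple x a | a < r] = row_free (\matrix_a x a).
Proof.
have sumE (v : 'rV[C]_r) : v *m \matrix_a x a = \sum_a v 0 a *: [tuple x a | a < r]`_a.
  by rewrite mulmx_sum_row; apply: eq_bigr => a _; rewrite rowK nth_mktuple.
apply/freeP/idP => [hfree | hX v hv a].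
  apply: inj_row_free => v hv; apply/rowP => a; rewrite mxE.
  by apply: hfree; rewrite -sumE.
have : (\row_a v a) *m \matrix_a x a = 0.
  by rewrite sumE -[RHS]hv; apply: eq_bigr => b _; rewrite mxE.
by move/eqP; rewrite mulmx_free_eq0 // => /eqP /rowP /(_ a); rewrite !mxE.
Qed.

Lemma not_free_dependency (C : fieldType) (n r : nat) (x : 'I_r -> 'rV[C]_n) :
  ~~ free [tuple x a | a < r] ->
  exists v : 'I_r -> C, \sum_a v a *: x a = 0 /\ exists b, v b != 0.
Proof.
rewrite free_row_free -kermx_eq0 => /rowV0Pn [v /sub_kermxP hv /rV0Pn [b vb]].
exists (v 0); split; last by exists b.
by rewrite -[RHS]hv mulmx_sum_row; apply: eq_bigr => a _; rewrite rowK.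
Qed.

Lemma free_dual (C : fieldType) (n r : nat) (x : 'I_r -> 'rV[C]_n) :
  free [tuple x a | a < r] ->
  exists U : 'I_n -> 'I_r -> C, forall b a, \sum_m x b 0 m * U m a = (b == a)%:R.
Proof.
rewrite free_row_free => /row_freeP [B hB]; exists (fun m a => B m a) => b a.
have := congr1 (fun M : 'M[C]_r => M b a) hB; rewrite /= !mxE => <-.
by apply: eq_bigr => m _; rewrite mxE.
Qed.

Lemma tableau_first_column (k r : nat) (lam : 'I_r -> nat) (row : 'I_k -> 'I_r)
    (col : 'I_k -> nat) :
  is_tableau lam row col -> exists box : 'I_r -> 'I_k, forall a, row (box a) = a /\ col (box a) = 0%N.
Proof.
case=> _ hlam _ _ hsurj.
apply: (@fin_all_exists _ (fun=> 'I_k) (fun a i => row i = a /\ col i = 0%N)) => a.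
exact: hsurj a 0%N (hlam a).
Qed.

Lemma young_pi_ptensor (C : numClosedFieldType) (n k r : nat)
    (row : 'I_k -> 'I_r) (col : 'I_k -> nat) (mu : C) :
  mu != 0 -> exists2 s : C, s != 0 & forall x : 'I_r -> 'rV[C]_n,
    young_pi row col mu (ptensor (fun i => x (row i))) = s *: col_antisym col (fun i => x (row i)).
Proof.
move=> mu0; exists (mu^-1 * #|[pred sig : {perm 'I_k} | rowpres row sig]|%:R) => [|x].
  rewrite mulf_neq0 ?invr_eq0 // pnatr_eq0 -lt0n; apply/card_gt0P; exists 1%g.
  by rewrite inE; apply/forallP => i; rewrite perm1.
by rewrite /young_pi young_c_ptensor scalerA.
Qed.

Theorem mainTheorem3 (C : numClosedFieldType) (n k r : nat)
  (lam : 'I_r -> nat) (row : 'I_k -> 'I_r) (col : 'I_k -> nat) (mu : C) :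
  is_tableau lam row col ->
  is_young_mu row col mu ->
  (forall x : 'I_r -> 'rV[C]_n,
     (young_pi row col mu (ptensor (fun i => x (row i))) != 0)
       <-> free [tuple x a | a < r])
  /\
  (forall x y : 'I_r -> 'rV[C]_n,
     free [tuple x a | a < r] ->
     (forall a, exists c : C, c != 0 /\ y a = c *: x a) ->
     exists l : C, l != 0 /\
       young_pi row col mu (ptensor (fun i => y (row i)))
       = l *: young_pi row col mu (ptensor (fun i => x (row i)))).
Proof.
move=> htab [mu0 _]; have [s s0 ypi] := young_pi_ptensor n row col mu0.
have [box hbox] := tableau_first_column htab.
have [_ _ box_eq _ _] := htab.
split=> [x | x y _ hy].
  rewrite ypi scaler_eq0 (negPf s0) /=; split=> [| /free_dual [U hU]].
    apply: contraR => /not_free_dependency [v [hv [b vb]]]; apply/eqP.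
    apply: (col_antisym_dependent (box := box) _ _ hv vb) => [a | a a'].
      by case: (hbox a).
    by rewrite (proj2 (hbox a)) (proj2 (hbox a')).
  exact: col_antisym_free box_eq hU.
have [c hc] := fin_all_exists hy.
exists (\prod_i c (row i)); split; first by apply/prodf_neq0 => i _; case: (hc (row i)).
rewrite !ypi (col_antisym_scale col row (x := x) (c := c)) => [|a]; last by case: (hc a).
by rewrite !scalerA mulrC.
Qed.
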